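(* In the upper half-plane model of $\mathbb{H}^2$, let $B_i=B(c_i,r_i)$, $i\in\mathbb{N}$, be pairwise disjoint closed Euclidean disks with centers $c_i\in\mathbb{Z}\subset\mathbb{R}$ and radii $r_i\le1$, with $|c_i-c_j|>1$ for $i\ne j$, let $h_i$ be the inversion in $\partial B_i$, and $C_i=\partial B_i\cap\mathbb{H}^2$. Fix $k\in\mathbb{N}_0$; for $n\ge1$ let $I_{k,n}$ be the set of multi-indices $\underline{i}=(i_1,\dots,i_n)$ with all $i_m>k$ and $i_m\ne i_{m+1}$, and let $r_{\underline{i}}$ be the Euclidean radius of the semicircle $h_{i_1}\circ\cdots\circ h_{i_{n-1}}(C_{i_n})$. Let $\alpha>0$. If $$\sum_{i\ne j,\ i>k,\ j>k}\left(\frac{1}{|c_i-c_j|-1}\right)^{2\alpha}\le1,$$ then for every $n\ge2$, $$\sum_{\underline{i}\in I_{k,n}}r_{\underline{i}}^{\alpha}\le\sum_{\underline{j}\in I_{k,n-1}}r_{\underline{j}}^{\alpha}.$$ *)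

From HB Require Import structures.
From mathcomp Require Import all_boot all_order all_algebra.
From mathcomp Require Import all_classical all_reals all_analysis.
Set Implicit Arguments. Unset Strict Implicit. Unset Printing Implicit Defensive.
Import Order.TTheory GRing.Theory Num.Theory.
Local Open Scope classical_set_scope.
Local Open Scope ring_scope.

Section Defs.
Variable R : realType.

Definition H2 : set (R * R) := [set p | 0 < p.2].

Definition cdisk (c r : R) : set (R * R) :=
  [set p | (p.1 - c) ^+ 2 + p.2 ^+ 2 <= r ^+ 2].

Definition semicircle (c r : R) : set (R * R) :=
  [set p | (p.1 - c) ^+ 2 + p.2 ^+ 2 = r ^+ 2 /\ 0 < p.2].

Definition inversion (c r : R) (p : R * R) : R * R :=
  let d := (p.1 - c) ^+ 2 + p.2 ^+ 2 in
  (c + r ^+ 2 * (p.1 - c) / d, r ^+ 2 * p.2 / d).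

(* Euclidean radius of a set which is a semicircle (a positive r such that
   A = semicircle c r for some real c; this r is unique) *)
Definition eucl_radius (A : set (R * R)) : R :=
  xget 0 [set r : R | 0 < r /\ exists c : R, A = semicircle c r].

Definition multi_idx (k n : nat) : set (seq nat) :=
  [set s | size s = n /\ all (fun i => k < i)%N s /\
           (forall m : nat, (m.+1 < n)%N -> nth 0%N s m <> nth 0%N s m.+1)].

(* h_{i_1} o ... o h_{i_{n-1}} (C_{i_n}) for s = (i_1,...,i_n) *)
Definition img_semicircle (c : nat -> int) (r : nat -> R) (s : seq nat)
  : set (R * R) :=
  (foldr (fun i g => inversion (c i)%:~R (r i) \o g) id (take (size s).-1 s))
    @` semicircle (c (last 0%N s))%:~R (r (last 0%N s)).

Definition r_multi (c : nat -> int) (r : nat -> R) (s : seq nat) : R :=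
  eucl_radius (img_semicircle c r s).

End Defs.

From HB Require Import structures.
From mathcomp Require Import all_boot all_order all_algebra.
From mathcomp Require Import all_classical all_reals all_analysis.
From mathcomp Require Import ring lra.
Set Implicit Arguments. Unset Strict Implicit. Unset Printing Implicit Defensive.
Import Order.TTheory GRing.Theory Num.Theory.
Local Open Scope classical_set_scope.
Local Open Scope ring_scope.

(* Let r_t be the radius of the semicircle attached to a word t with first
   letter j; by induction this semicircle lies in the disk B_j.  For i <> j the
   disks B_i and B_j are disjoint and |c_i - c_j| > 1 >= r_j, so the semicircle
   stays at distance at least |c_i - c_j| - 1 from c_i, and its inversion in
   the boundary of B_i is a semicircle inside B_i of radius at most
   r_t / (|c_i - c_j| - 1)^2.  Summing r_(i t)^alpha over the admissible i thus
   gives at most r_t^alpha times a row sum of the hypothesis, i.e. at most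
   r_t^alpha; summing over t yields the claim. *)

Section Inversion.
Variable R : realType.
Implicit Types (c s x rho : R).

Definition inv_center c s x rho : R :=
  c + s ^+ 2 * (x - c) / ((x - c) ^+ 2 - rho ^+ 2).

Definition inv_radius c s x rho : R :=
  s ^+ 2 * rho / ((x - c) ^+ 2 - rho ^+ 2).

Lemma inv_denomE c x rho :
  (x - c) ^+ 2 - rho ^+ 2 = (`|x - c| - rho) * (`|x - c| + rho).
Proof. by rewrite -[(x - c) ^+ 2]real_normK ?num_real //; ring. Qed.

Lemma inv_denom_gt0 c x rho : 0 < rho -> rho < `|x - c| ->
  0 < (x - c) ^+ 2 - rho ^+ 2.
Proof. by move=> rho_gt0 rho_lt; rewrite inv_denomE mulr_gt0 //; lra. Qed.

Lemma inversion_semicircle_sub c s x rho : 0 < s ->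
  (x - c) ^+ 2 - rho ^+ 2 != 0 ->
  inversion c s @` semicircle x rho `<=`
  semicircle (inv_center c s x rho) (inv_radius c s x rho).
Proof.
move=> s_gt0 den_neq0 _ [[p1 y] [/= on_circle y_gt0] <-].
rewrite /inversion /semicircle /inv_center /inv_radius /=.
have y2E : y ^+ 2 = rho ^+ 2 - ((p1 - c) - (x - c)) ^+ 2.
  by rewrite -on_circle; ring.
have d_gt0 : 0 < (p1 - c) ^+ 2 + y ^+ 2 by rewrite ltr_wpDl ?sqr_ge0 ?exprn_gt0.
split; last by rewrite divr_gt0 ?mulr_gt0 ?exprn_gt0.
have d_neq0 : (p1 - c) ^+ 2 + (rho ^+ 2 - ((p1 - c) - (x - c)) ^+ 2) != 0.
  by rewrite -y2E gt_eqF.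
rewrite [(s ^+ 2 * y / _) ^+ 2]expr_div_n exprMn y2E.
by field; rewrite d_neq0 den_neq0.
Qed.

Lemma inversionK c s q : 0 < s -> H2 q ->
  inversion c s (inversion c s q) = q.
Proof.
case: q => q1 y s_gt0; rewrite /H2 /inversion /= => y_gt0.
set d := (q1 - c) ^+ 2 + y ^+ 2.
have d_neq0 : d != 0 by rewrite gt_eqF // ltr_wpDl ?sqr_ge0 ?exprn_gt0.
have s_neq0 : s != 0 by rewrite gt_eqF.
have -> : c + s ^+ 2 * (q1 - c) / d - c = s ^+ 2 * (q1 - c) / d by ring.
have -> : (s ^+ 2 * (q1 - c) / d) ^+ 2 + (s ^+ 2 * y / d) ^+ 2 = s ^+ 4 / d.
  by rewrite /d; field; rewrite -/d d_neq0.
by congr pair; field; rewrite ?d_neq0 ?s_neq0 ?expf_neq0.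
Qed.

(* The formulas applied to the image semicircle give back the original one. *)
Lemma inversion_semicircle c s x rho : 0 < s -> 0 < rho -> rho < `|x - c| ->
  inversion c s @` semicircle x rho =
  semicircle (inv_center c s x rho) (inv_radius c s x rho).
Proof.
move=> s_gt0 rho_gt0 rho_lt.
have den_neq0 : (x - c) ^+ 2 - rho ^+ 2 != 0 by rewrite gt_eqF ?inv_denom_gt0.
have s_neq0 : s != 0 by rewrite gt_eqF.
apply/seteqP; split; first exact: inversion_semicircle_sub.
set x' := inv_center c s x rho; set rho' := inv_radius c s x rho.
have den'E : (x' - c) ^+ 2 - rho' ^+ 2 = s ^+ 4 / ((x - c) ^+ 2 - rho ^+ 2).
  by rewrite /x' /rho' /inv_center /inv_radius; field.
have den'_neq0 : (x' - c) ^+ 2 - rho' ^+ 2 != 0.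
  by rewrite den'E mulf_neq0 ?invr_eq0 ?expf_neq0.
have x'K : inv_center c s x' rho' = x.
  by rewrite /inv_center den'E /x' /inv_center; field; rewrite den_neq0 s_neq0.
have rho'K : inv_radius c s x' rho' = rho.
  by rewrite /inv_radius den'E /rho' /inv_radius; field; rewrite den_neq0 s_neq0.
move=> q q_in.
have := inversion_semicircle_sub s_gt0 den'_neq0; rewrite x'K rho'K => sub.
exists (inversion c s q); first by apply: sub; exists q.
by apply: inversionK => //; case: q_in.
Qed.

Lemma inv_extentE c s x rho : 0 < rho -> rho < `|x - c| ->
  `|inv_center c s x rho - c| + inv_radius c s x rho =
  s ^+ 2 / (`|x - c| - rho).
Proof.
move=> rho_gt0 rho_lt.
have den_gt0 := inv_denom_gt0 rho_gt0 rho_lt.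
have -> : inv_center c s x rho - c = s ^+ 2 / ((x - c) ^+ 2 - rho ^+ 2) * (x - c).
  by rewrite /inv_center; ring.
rewrite normrM ger0_norm ?divr_ge0 ?sqr_ge0 ?ltW // /inv_radius.
rewrite inv_denomE in den_gt0 *.
by field; apply/andP; split; rewrite gt_eqF //; lra.
Qed.

Lemma inv_radius_le c s x rho d : 0 < rho -> 0 < d -> d <= `|x - c| - rho ->
  inv_radius c s x rho <= s ^+ 2 * rho / d ^+ 2.
Proof.
move=> rho_gt0 d_gt0 d_le.
rewrite /inv_radius inv_denomE ler_pdivrMr; last by rewrite mulr_gt0 //; lra.
rewrite [_ / d ^+ 2 * _]mulrAC ler_pdivlMr ?exprn_gt0 //.
apply: ler_wpM2l; first by rewrite mulr_ge0 ?sqr_ge0 ?ltW.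
by rewrite expr2 ler_pM //; lra.
Qed.

Lemma semicircle_radius_inj x x' rho rho' : 0 < rho -> 0 < rho' ->
  semicircle x rho = semicircle x' rho' -> rho = rho'.
Proof.
move=> rho_gt0 rho'_gt0 eq_semi.
have : semicircle x' rho' (x, rho) by rewrite -eq_semi; split => //=; ring.
have : semicircle x rho (x', rho') by rewrite eq_semi; split => //=; ring.
move=> [/= top' _] [/= top _].
have : (x' - x) ^+ 2 = (x - x') ^+ 2 by ring.
nra.
Qed.

Lemma eucl_radius_semicircle x rho : 0 < rho ->
  eucl_radius (semicircle x rho) = rho.
Proof.
move=> rho_gt0; apply: xget_unique; first by split => //; exists x.
by move=> rho' [rho'_gt0 [x' /semicircle_radius_inj]] ->.
Qed.

Lemma eucl_radius_ge0 (A : set (R * R)) : 0 <= eucl_radius A.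
Proof. by rewrite /eucl_radius; case: xgetP => // rho _ [/ltW]. Qed.

Lemma cdisk_disjoint_dist c c' rho rho' : 0 < rho -> 0 < rho' ->
  cdisk c rho `&` cdisk c' rho' = set0 -> rho + rho' < `|c - c'|.
Proof.
move=> rho_gt0 rho'_gt0 disj; rewrite ltNge; apply/negP => dist_le.
set m := rho + rho'.
have m_gt0 : 0 < m by rewrite addr_gt0.
have dist2_le : (c' - c) ^+ 2 <= m ^+ 2.
  rewrite -normrN opprB in dist_le.
  by rewrite -real_normK ?num_real // !expr2 ler_pM.
(* the point dividing [c, c'] in the ratio rho : rho' lies in both disks *)
have : (cdisk c rho `&` cdisk c' rho') ((rho' * c + rho * c') / m, 0).
  split; rewrite /cdisk /=.
    have -> : ((rho' * c + rho * c') / m - c) ^+ 2 + 0 ^+ 2 =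
              rho ^+ 2 * ((c' - c) ^+ 2 / m ^+ 2).
      by rewrite /m; field; rewrite -/m gt_eqF.
    by rewrite ler_piMr ?sqr_ge0 // ler_pdivrMr ?exprn_gt0 // mul1r.
  have -> : ((rho' * c + rho * c') / m - c') ^+ 2 + 0 ^+ 2 =
            rho' ^+ 2 * ((c' - c) ^+ 2 / m ^+ 2).
    by rewrite /m; field; rewrite -/m gt_eqF.
  by rewrite ler_piMr ?sqr_ge0 // ler_pdivrMr ?exprn_gt0 // mul1r.
by rewrite disj.
Qed.

Lemma inversion_semicircle_in_disk c c' s s' x rho :
  0 < s -> 0 < rho -> s + s' < `|c - c'| -> `|x - c'| + rho <= s' ->
  exists x' rho', [/\ 0 < rho',
    inversion c s @` semicircle x rho = semicircle x' rho',
    `|x' - c| + rho' <= s &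
    rho' <= s ^+ 2 * rho / (`|c - c'| - s') ^+ 2].
Proof.
move=> s_gt0 rho_gt0 disj in_disk.
have far : `|c - c'| - s' <= `|x - c| - rho.
  have : `|c - c'| <= `|x - c| + `|x - c'|.
    by rewrite (distrC x c); exact: ler_distD.
  lra.
have rho_lt : rho < `|x - c| by lra.
exists (inv_center c s x rho), (inv_radius c s x rho); split.
- by rewrite divr_gt0 ?mulr_gt0 ?exprn_gt0 ?inv_denom_gt0.
- exact: inversion_semicircle.
- rewrite inv_extentE // ler_pdivrMr; last lra.
  by rewrite expr2 ler_pM2l //; lra.
- by apply: inv_radius_le => //; lra.
Qed.

End Inversion.

Section Esum.
Variable R : realType.

Lemma esum_subset_le (T : choiceType) (A B : set T) (a : T -> \bar R) :
  A `<=` B -> (forall x, B x -> (0 <= a x)%E) ->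
  (\esum_(x in A) a x <= \esum_(x in B) a x)%E.
Proof.
move=> AB a_ge0; rewrite [X in (_ <= X)%E](esumID A) // setIidr //.
by rewrite leeDl // esum_ge0 // => x [/a_ge0].
Qed.

Lemma esumZl_le (T : choiceType) (I : set T) (y : R) (a : T -> \bar R) :
  0 <= y -> (forall x, (0 <= a x)%E) ->
  (\esum_(x in I) (y%:E * a x) <= y%:E * \esum_(x in I) a x)%E.
Proof.
move=> y_ge0 a_ge0; apply: ge_ereal_sup => _ [X [finX XI] <-].
rewrite fsbig_finite //= -ge0_sume_distrr //.
apply: lee_wpmul2l; first by rewrite lee_fin.
by rewrite -fsbig_finite //; apply: ereal_sup_ubound; exists X.
Qed.

Lemma esum_section_le (T : choiceType) (P : set (T * T)) (j : T) (a : T * T -> \bar R) :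
  (forall z, P z -> (0 <= a z)%E) ->
  (\esum_(i in [set i | P (i, j)]) a (i, j) <= \esum_(z in P) a z)%E.
Proof.
move=> a_ge0; rewrite -(esum_image _ (fun i => (i, j))); last by move=> ? ? _ _ [].
by apply: esum_subset_le => // _ [i Pij <-].
Qed.

End Esum.

Section MultiIndices.
Implicit Types (k n i : nat) (t : seq nat).

Definition next_idx k t : set nat := [set i | (k < i)%N /\ i <> head 0%N t].

Lemma multi_idx_cons k n i t :
  multi_idx k n.+2 (i :: t) <-> [/\ (k < i)%N, i <> head 0%N t & multi_idx k n.+1 t].
Proof.
split.
  move=> [[size_t] [/andP[k_lt_i all_t] nth_neq]].
  split => //; first by rewrite -nth0; exact: (nth_neq 0%N).
  by split=> //; split=> // m m_lt; exact: (nth_neq m.+1).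
move=> [k_lt_i i_neq [size_t [all_t nth_neq]]].
split; first by rewrite /= size_t.
split; first by rewrite /= k_lt_i.
by case=> [|m] m_lt /=; [rewrite nth0 | apply: nth_neq].
Qed.

Lemma multi_idx_succ k n :
  multi_idx k n.+2 =
  (fun p : seq nat * nat => p.2 :: p.1) @` (multi_idx k n.+1 `*`` next_idx k).
Proof.
apply/seteqP; split.
  case=> [[]//|i t] /multi_idx_cons[k_lt_i i_neq t_in].
  by exists (t, i).
by move=> _ [[t i] [t_in [k_lt_i i_neq]] <-]; apply/multi_idx_cons.
Qed.

Lemma multi_idx_neq_nil k n t : multi_idx k n.+1 t -> t != [::].
Proof. by case: t => [[]|]. Qed.

Lemma multi_idx_head k n t : multi_idx k n.+1 t -> (k < head 0%N t)%N.
Proof. by case: t => [[]//|i t] [_ [/= /andP[]]]. Qed.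

Lemma multi_idx_sub k n : multi_idx k n `<=` multi_idx 0 n.
Proof.
move=> t [size_t [all_t nth_neq]]; split=> //; split=> //.
by apply/allP => i /(allP all_t); exact: leq_ltn_trans.
Qed.

End MultiIndices.

Section Chains.
Variables (R : realType) (c : nat -> int) (r : nat -> R).
Hypothesis r_gt0 : forall i, (0 < i)%N -> 0 < r i.
Hypothesis r_le1 : forall i, (0 < i)%N -> r i <= 1.
Hypothesis disk_disj : forall i j, (0 < i)%N -> (0 < j)%N -> i <> j ->
  cdisk (c i)%:~R (r i) `&` cdisk (c j)%:~R (r j) = set0.
Hypothesis center_sep : forall i j, (0 < i)%N -> (0 < j)%N -> i <> j ->
  1 < `|(c i)%:~R - (c j)%:~R : R|.

Local Notation C i := ((c i)%:~R : R).

Lemma img_semicircle_cons i t : t != [::] ->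
  img_semicircle c r (i :: t) = inversion (C i) (r i) @` img_semicircle c r t.
Proof. by case: t => [//|j t] _; rewrite /img_semicircle /= image_comp. Qed.

Lemma img_semicircle_cons_step i t x rho : t != [::] ->
  (0 < i)%N -> (0 < head 0%N t)%N -> i <> head 0%N t -> 0 < rho ->
  img_semicircle c r t = semicircle x rho ->
  `|x - C (head 0%N t)| + rho <= r (head 0%N t) ->
  exists x' rho', [/\ 0 < rho', img_semicircle c r (i :: t) = semicircle x' rho',
    `|x' - C i| + rho' <= r i &
    rho' <= rho / (`|C i - C (head 0%N t)| - 1) ^+ 2].
Proof.
set j := head 0%N t => t_neq0 i_gt0 j_gt0 i_neq_j rho_gt0 imgE in_disk.
have disj := cdisk_disjoint_dist (r_gt0 i_gt0) (r_gt0 j_gt0)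
  (disk_disj i_gt0 j_gt0 i_neq_j).
have [x' [rho' [rho'_gt0 invE in_disk' rho'_le]]] :=
  inversion_semicircle_in_disk (r_gt0 i_gt0) rho_gt0 disj in_disk.
exists x', rho'; split => //; first by rewrite img_semicircle_cons // imgE.
apply: (le_trans rho'_le).
have sep := center_sep i_gt0 j_gt0 i_neq_j.
have ri_gt0 := r_gt0 i_gt0; have ri_le1 := r_le1 i_gt0; have rj_le1 := r_le1 j_gt0.
have sq_le : (`|C i - C j| - 1) ^+ 2 <= (`|C i - C j| - r j) ^+ 2.
  by rewrite ler_sqr ?nnegrE; lra.
have ri2_le1 : r i ^+ 2 <= 1 by rewrite expr_le1 // ltW.
apply: (@le_trans _ _ (rho / (`|C i - C j| - r j) ^+ 2)).
  rewrite ler_pM2r; last by rewrite invr_gt0 exprn_gt0 //; lra.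
  exact: ler_piMl (ltW rho_gt0) ri2_le1.
rewrite ler_pM2l // lef_pV2 ?posrE ?exprn_gt0 //; lra.
Qed.

Lemma img_semicircle_in_disk n t : multi_idx 0 n.+1 t ->
  exists x rho, [/\ 0 < rho, img_semicircle c r t = semicircle x rho &
    `|x - C (head 0%N t)| + rho <= r (head 0%N t)].
Proof.
elim: n t => [|n IH] [|i t] //; try by case.
  case: t => [|? ?] [//= _ [/andP[i_gt0 _] _]].
  exists (C i), (r i); split; first exact: r_gt0.
    by rewrite /img_semicircle /= image_id.
  by rewrite subrr normr0 add0r.
move=> /multi_idx_cons[i_gt0 i_neq t_in].
have [x [rho [rho_gt0 imgE in_disk]]] := IH t t_in.
have [x' [rho' [rho'_gt0 img'E in_disk' _]]] :=
  img_semicircle_cons_step (multi_idx_neq_nil t_in) i_gt0 (multi_idx_head t_in)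
    i_neq rho_gt0 imgE in_disk.
by exists x', rho'.
Qed.

Lemma r_multi_cons_le n t i : multi_idx 0 n.+1 t -> (0 < i)%N -> i <> head 0%N t ->
  r_multi c r (i :: t) <= r_multi c r t / (`|C i - C (head 0%N t)| - 1) ^+ 2.
Proof.
move=> t_in i_gt0 i_neq.
have [x [rho [rho_gt0 imgE in_disk]]] := img_semicircle_in_disk t_in.
have [x' [rho' [rho'_gt0 img'E _ rho'_le]]] :=
  img_semicircle_cons_step (multi_idx_neq_nil t_in) i_gt0 (multi_idx_head t_in)
    i_neq rho_gt0 imgE in_disk.
by rewrite /r_multi img'E imgE !eucl_radius_semicircle.
Qed.

Lemma r_multi_cons_powR_le alpha n t i : 0 <= alpha ->
  multi_idx 0 n.+1 t -> (0 < i)%N -> i <> head 0%N t ->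
  r_multi c r (i :: t) `^ alpha <=
  r_multi c r t `^ alpha * ((`|C i - C (head 0%N t)| - 1)^-1) `^ (2 * alpha).
Proof.
move=> alpha_ge0 t_in i_gt0 i_neq.
have sep := center_sep i_gt0 (multi_idx_head t_in) i_neq.
have w_ge0 : 0 <= (`|C i - C (head 0%N t)| - 1)^-1 by rewrite invr_ge0 subr_ge0 ltW.
have r_ge0 (s : seq nat) : 0 <= r_multi c r s := eucl_radius_ge0 _.
rewrite powRrM powR_mulrn // -powRM ?exprn_ge0 //.
apply: ge0_ler_powR; rewrite ?nnegrE ?mulr_ge0 ?exprn_ge0 //.
by rewrite exprVn; exact: r_multi_cons_le t_in i_gt0 i_neq.
Qed.

Variables (k : nat) (alpha : R).
Hypothesis alpha_ge0 : 0 <= alpha.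
Hypothesis weight_sum_le1 :
  (\esum_(ij in [set ij : nat * nat | ij.1 <> ij.2 /\ (k < ij.1)%N /\ (k < ij.2)%N])
     (((`|(c ij.1)%:~R - (c ij.2)%:~R : R| - 1)^-1) `^ (2 * alpha))%:E <= 1)%E.

Lemma esum_next_idx_le n t : multi_idx k n.+1 t ->
  (\esum_(i in next_idx k t) (r_multi c r (i :: t) `^ alpha)%:E <=
   (r_multi c r t `^ alpha)%:E)%E.
Proof.
move=> t_in; set j := head 0%N t.
set w := fun ij : nat * nat => (((`|C ij.1 - C ij.2| - 1)^-1) `^ (2 * alpha))%:E.
have w_ge0 ij : (0 <= w ij)%E by rewrite lee_fin powR_ge0.
apply: (@le_trans _ _
  (\esum_(i in next_idx k t) ((r_multi c r t `^ alpha)%:E * w (i, j)))%E).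
  apply: le_esum => i [k_lt_i i_neq]; rewrite -EFinM lee_fin.
  apply: r_multi_cons_powR_le alpha_ge0 (multi_idx_sub t_in) _ i_neq.
  exact: leq_ltn_trans k_lt_i.
apply: le_trans (esumZl_le _ (powR_ge0 _ _) (fun i => w_ge0 (i, j))) _.
rewrite -[X in (_ <= X)%E]mule1 lee_wpmul2l ?lee_fin ?powR_ge0 //.
apply: le_trans weight_sum_le1.
apply: le_trans (esum_section_le j (fun ij _ => w_ge0 ij)).
apply: esum_subset_le => [i [k_lt_i i_neq]|ij _] //.
by split=> //; split=> //; exact: multi_idx_head t_in.
Qed.

Lemma esum_multi_idx_succ_le n :
  (\esum_(s in multi_idx k n.+2) (r_multi c r s `^ alpha)%:E <=
   \esum_(s in multi_idx k n.+1) (r_multi c r s `^ alpha)%:E)%E.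
Proof.
rewrite multi_idx_succ esum_image; last by move=> [t i] [t' i'] _ _ [-> ->].
rewrite -(esum_esum (a := fun t i => (r_multi c r (i :: t) `^ alpha)%:E)) /=; last first.
  by move=> t i _ _; rewrite lee_fin powR_ge0.
by apply: le_esum => t; exact: esum_next_idx_le.
Qed.

End Chains.

Theorem lemma3p3 (R : realType) (c : nat -> int) (r : nat -> R) (k : nat)
  (alpha : R)
  (hr0 : forall i : nat, (0 < i)%N -> 0 < r i)
  (hr1 : forall i : nat, (0 < i)%N -> r i <= 1)
  (hdisj : forall i j : nat, (0 < i)%N -> (0 < j)%N -> i <> j ->
     cdisk (c i)%:~R (r i) `&` cdisk (c j)%:~R (r j) = set0)
  (hsep : forall i j : nat, (0 < i)%N -> (0 < j)%N -> i <> j ->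
     1 < `|(c i)%:~R - (c j)%:~R : R|)
  (halpha : 0 < alpha)
  (hsum : (\esum_(ij in [set ij : nat * nat | ij.1 <> ij.2 /\ (k < ij.1)%N /\ (k < ij.2)%N])
            (((`|(c ij.1)%:~R - (c ij.2)%:~R : R| - 1)^-1) `^ (2 * alpha))%:E <= 1)%E) :
  forall n : nat, (2 <= n)%N ->
    (\esum_(s in multi_idx k n) ((r_multi c r s) `^ alpha)%:E
       <= \esum_(s in multi_idx k n.-1) ((r_multi c r s) `^ alpha)%:E)%E.
Proof.
move=> [|[|n]] // _.
exact: (esum_multi_idx_succ_le hr0 hr1 hdisj hsep (k := k) (ltW halpha) hsum).
Qed.
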